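(* Let $\{\mathsf{P}_\theta : \theta \in \mathbb{T}\}$ be a statistical model for data $Y$ taking values in $\mathbb{Y}$, with likelihood $\theta \mapsto L_y(\theta)$ and maximum likelihood estimator $\hat\theta_y$ existing for each $y$. Let $R(y,\theta) = L_y(\theta)/L_y(\hat\theta_y)$, let $\pi_y(\theta) = \mathsf{P}_\theta\{R(Y,\theta) \le R(y,\theta)\}$, and define $\overline{\Pi}_y(H) = \sup_{\theta \in H} \pi_y(\theta)$ and $\underline{\Pi}_y(H) = 1 - \overline{\Pi}_y(H^c)$ for $H \subseteq \mathbb{T}$. Then for all $\alpha \in [0,1]$: (a) for any given $H \subseteq \mathbb{T}$, the test that rejects $H$ if and only if $\overline{\Pi}_Y(H) \le \alpha$ has Type I error probability at most $\alpha$, i.e., \[ \sup_{\Theta \in H} \mathsf{P}_\Theta\{ \overline{\Pi}_Y(H) \le \alpha \} \le \alpha; \] (b) the set $C_\alpha(Y) = \{\theta \in \mathbb{T} : \pi_Y(\theta) > \alpha\}$ has coverage probability at least $1-\alpha$, i.e., \[ \sup_{\Theta \in \mathbb{T}} \mathsf{P}_\Theta\{ C_\alpha(Y) \not\ni \Theta \} \le \alpha. \]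
   Context: Here $\Theta$ denotes the true parameter value and $Y \sim \mathsf{P}_\Theta$. The pair $(\underline{\Pi}_y, \overline{\Pi}_y)$ is the necessity–possibility measure pair (the inferential model output) determined by the possibility contour $\pi_y$. *)

From HB Require Import structures.
From mathcomp Require Import all_boot all_order all_algebra.
From mathcomp Require Import all_classical all_reals all_analysis.
Set Implicit Arguments. Unset Strict Implicit. Unset Printing Implicit Defensive.
Import Order.TTheory GRing.Theory Num.Theory.
Local Open Scope classical_set_scope.
Local Open Scope ring_scope.

Section Defs.
Context {d : measure_display} {Y : measurableType d} {R : realType} {T : Type}.

Definition rellik (f : T -> Y -> R) (thetahat : Y -> T) (y : Y) (theta : T) : R :=
  f theta y / f (thetahat y) y.

Definition contour (P : T -> probability Y R) (f : T -> Y -> R)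
  (thetahat : Y -> T) (y : Y) (theta : T) : \bar R :=
  P theta [set y' | rellik f thetahat y' theta <= rellik f thetahat y theta].

Definition upper_poss (P : T -> probability Y R) (f : T -> Y -> R)
  (thetahat : Y -> T) (y : Y) (H : set T) : \bar R :=
  ereal_sup [set contour P f thetahat y theta | theta in H].

Definition lower_poss (P : T -> probability Y R) (f : T -> Y -> R)
  (thetahat : Y -> T) (y : Y) (H : set T) : \bar R :=
  (1 - upper_poss P f thetahat y (~` H))%E.

(* outer probability of an arbitrary (possibly non-measurable) event *)
Definition outer_prob (Q : probability Y R) (A : set Y) : \bar R :=
  ereal_inf [set Q B | B in [set B | measurable B /\ A `<=` B]].

End Defs.

From HB Require Import structures.
From mathcomp Require Import all_boot all_order all_algebra.
From mathcomp Require Import all_classical all_reals all_analysis.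
From mathcomp Require Import measurable_realfun.
Import Order.TTheory GRing.Theory Num.Theory.
Local Open Scope classical_set_scope.
Local Open Scope ring_scope.

(** [pi_y(theta)] is the distribution function [F] of the relative
    likelihood [X = R(Y, theta)] under [P_theta], evaluated at [X(y)], so it
    is stochastically no smaller than a uniform variable.  Indeed the
    down-set [{F <= alpha}] of the reals is covered by the half-lines
    [(-oo, g n]] of an increasing sequence [g] inside it, so
    [{y | F (X y) <= alpha}] lies in the increasing union of the events
    [{X <= g n}], each of probability at most [alpha]; continuity from below
    concludes.  Both claims follow because [upper_poss y H >= pi_y(Theta)]
    for [Theta] in [H]. *)

Lemma down_closed_cofinal_seq {R : realType} [S : set R] :
  (forall x x', x <= x' -> S x' -> S x) -> S !=set0 ->
  exists g : nat -> R, [/\ {homo g : n m / (n <= m)%N >-> n <= m},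
    forall n, S (g n) & forall x, S x -> exists n, x <= g n].
Proof.
move=> Sdown [x0 Sx0].
have [ubS|nubS] := pselect (has_ubound S); last first.
  have Sn (n : nat) : S n%:R.
    apply: contrapT => nSn; apply: nubS; exists n%:R => x Sx.
    by rewrite leNgt; apply/negP => /ltW nx; apply: nSn; exact: Sdown nx Sx.
  exists (fun n => n%:R); split => // [n m|x _]; first by rewrite ler_nat.
  exists (Num.bound `|x|); apply: le_trans (ler_norm _) _.
  exact/ltW/archi_boundP.
have supS : has_sup S by split => //; exists x0.
have [Ssup|nSsup] := pselect (S (sup S)).
  by exists (fun=> sup S); split => // x Sx; exists 0%N; exact: sup_upper_bound.
exists (fun n => sup S - n.+1%:R^-1); split.
- by move=> n m nm; rewrite lerD2l lerN2 lef_pV2 ?posrE ?ltr0Sn ?ler_nat.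
- move=> n; have ipos : 0 < n.+1%:R^-1 :> R by rewrite invr_gt0 ltr0Sn.
  have [e Se lt_e] := sup_adherent ipos supS.
  exact: Sdown (ltW lt_e) Se.
- move=> x Sx; have lt_x : x < sup S.
    rewrite lt_neqAle sup_upper_bound // andbT.
    by apply: contra_notN nSsup => /eqP <-.
  have gap : 0 < (sup S - x)^-1 by rewrite invr_gt0 subr_gt0.
  exists (Num.bound (sup S - x)^-1); rewrite lerBrDr -lerBrDl.
  rewrite -[leRHS]invrK lef_pV2 ?posrE ?invr_gt0 ?ltr0Sn ?subr_gt0 //.
  apply: le_trans (ltW (archi_boundP (ltW gap))) _.
  by rewrite ler_nat.
Qed.

Lemma measure_nondecreasing_bigcup_le d (T : measurableType d) (R : realType)
    (mu : {measure set T -> \bar R}) (F : nat -> set T) (a : \bar R) :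
  (forall n, measurable (F n)) -> nondecreasing_seq F ->
  (forall n, (mu (F n) <= a)%E) -> (mu (\bigcup_n F n) <= a)%E.
Proof.
move=> mF ndF muFa.
have cvg_mu := nondecreasing_cvg_mu (mu := mu) mF (bigcupT_measurable _ mF) ndF.
rewrite -(cvg_lim _ cvg_mu) //; apply: lime_le; last exact: nearW.
by apply/cvg_ex; exists (mu (\bigcup_n F n)).
Qed.

Section outer_prob.
Context {d} {Y : measurableType d} {R : realType} (Q : probability Y R).

Lemma outer_prob_le_measure (A B : set Y) :
  measurable B -> A `<=` B -> (outer_prob Q A <= Q B)%E.
Proof. by move=> mB AB; apply: ereal_inf_lbound; exists B. Qed.

Lemma le_outer_prob (A A' : set Y) :
  A `<=` A' -> (outer_prob Q A <= outer_prob Q A')%E.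
Proof.
move=> AA'; apply: le_ereal_inf_tmp => _ [B [mB A'B] <-].
exact: outer_prob_le_measure _ _ _ (subset_trans AA' A'B).
Qed.

Lemma outer_prob_pvalue_le (X : Y -> R) (alpha : R) :
  (forall c, measurable [set y | X y <= c]) -> 0 <= alpha ->
  (outer_prob Q [set y | Q [set y' | (X y' <= X y)%R] <= alpha%:E]
     <= alpha%:E)%E.
Proof.
move=> mX alpha_ge0.
set S := [set x | (Q [set y | (X y <= x)%R] <= alpha%:E)%E].
have Sdown x x' : x <= x' -> S x' -> S x.
  rewrite /S /= => xx' Sx'; apply: le_trans Sx'.
  apply: le_measure; rewrite ?inE //.
  by move=> y /= /le_trans; apply.
have [S_neq0|S0] := pselect (S !=set0); last first.
  apply: le_trans (outer_prob_le_measure _ _ measurable0 _) _.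
    by move=> y Sy; apply: S0; exists (X y).
  by rewrite measure0 lee_fin.
have [g [ndg Sg cofinal_g]] := down_closed_cofinal_seq Sdown S_neq0.
pose F n := [set y | X y <= g n].
have mF n : measurable (F n) by exact: mX.
apply: le_trans (outer_prob_le_measure _ _ (bigcupT_measurable _ mF) _) _.
  by move=> y /cofinal_g [n le_n]; exists n.
apply: measure_nondecreasing_bigcup_le => // n m nm.
by apply/subsetPset => y /le_trans; apply; apply: ndg.
Qed.

End outer_prob.

Lemma measurable_divr_le d (Y : measurableType d) (R : realType) (u v : Y -> R)
    (c : R) :
  measurable_fun setT u -> measurable_fun setT v -> (forall y, 0 < v y) ->
  measurable [set y | u y / v y <= c].
Proof.
move=> mu mv v_gt0.
have -> : [set y | u y / v y <= c] = [set y | u y <= c * v y].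
  by apply/seteqP; split => y /=; rewrite ler_pdivrMr.
have := measurable_fun_ler mu (measurable_funM (measurable_cst c) mv) measurableT.
by move=> /(_ [set true] I); rewrite setTI.
Qed.

Lemma contour_le_upper_poss d (Y : measurableType d) (R : realType) (T : Type)
    (P : T -> probability Y R) (f : T -> Y -> R) (thetahat : Y -> T)
    (y : Y) (H : set T) (theta : T) :
  H theta ->
  (contour P f thetahat y theta <= upper_poss P f thetahat y H)%E.
Proof. by move=> Htheta; apply: ereal_sup_ubound; exists theta. Qed.

Theorem corollary1 (d : measure_display) (Y : measurableType d) (R : realType)
  (T : Type) (P : T -> probability Y R)
  (mu : {measure set Y -> \bar R}) (f : T -> Y -> R) (thetahat : Y -> T)
  (* f theta is the density (likelihood) of P theta w.r.t. mu *)
  (f_ge0 : forall theta y, 0 <= f theta y)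
  (f_meas : forall theta, measurable_fun setT (f theta))
  (P_dens : forall theta (A : set Y), measurable A ->
     P theta A = (\int[mu]_(y in A) (f theta y)%:E)%E)
  (* thetahat y is a maximum likelihood estimator *)
  (mle_max : forall y theta, f theta y <= f (thetahat y) y)
  (mle_pos : forall y, 0 < f (thetahat y) y)
  (mle_meas : measurable_fun setT (fun y => f (thetahat y) y))
  (alpha : R) (alpha_ge0 : 0 <= alpha) (alpha_le1 : alpha <= 1) :
  (forall H : set T,
     (ereal_sup [set outer_prob (P Th)
                   [set y | (upper_poss P f thetahat y H <= alpha%:E)%E]
                 | Th in H] <= alpha%:E)%E)
  /\
  (ereal_sup [set outer_prob (P Th)
                [set y | ~ (alpha%:E < contour P f thetahat y Th)%E]
              | Th in [set: T]] <= alpha%:E)%E.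
Proof.
have contour_valid theta : (outer_prob (P theta)
    [set y | (contour P f thetahat y theta <= alpha%:E)%E] <= alpha%:E)%E.
  apply: (outer_prob_pvalue_le (P theta) (fun y => rellik f thetahat y theta)) => // c.
  exact: measurable_divr_le.
split.
  move=> H; apply: ge_ereal_sup => _ [theta Htheta <-].
  apply: le_trans (contour_valid theta); apply: le_outer_prob => y /=.
  exact/le_trans/contour_le_upper_poss.
apply: ge_ereal_sup => _ [theta _ <-].
apply: le_trans (contour_valid theta); apply: le_outer_prob => y /=.
by rewrite leNgt => /negP.
Qed.
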